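(* Let $\mathcal{F}\subseteq\mathcal{P}(\omega)$ be a free filter, let $h\colon Q\to Q$ be a homeomorphism of $Q=[-1,1]^\omega$, and let $D\subseteq(-1,1)^\omega$ be countable and dense in $Q$. Assume there is $z\in C_\mathcal{F}$ such that for every $d\in D$ and $n\in\omega$, $|(d-h(d))(n)|\le|z(n)|$. Then $h[K_\mathcal{F}]=K_\mathcal{F}$.
   Context: A filter on $\omega$ is free if it contains all cofinite sets. $Q=[-1,1]^\omega$ has the product topology, $Q^\circ=(-1,1)^\omega$. $K_\mathcal{F}=\{f\in Q:\forall m\in\omega\ \{n\in\omega:|f(n)|<2^{-m}\}\in\mathcal{F}\}$ and $C_\mathcal{F}=K_\mathcal{F}\cap Q^\circ$. Differences are coordinatewise. *)

From HB Require Import structures.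
From mathcomp Require Import all_boot all_order all_algebra.
From mathcomp Require Import all_classical all_reals all_analysis.
Unset Printing Implicit Defensive.
Import Order.TTheory GRing.Theory Num.Theory.
Import numFieldNormedType.Exports.
Local Open Scope classical_set_scope.
Local Open Scope ring_scope.

Notation Romega R := {ptws nat -> R}.

Definition Qcube (R : realType) : set (Romega R) := [set f | forall n, `|f n| <= 1].
Definition Qopen (R : realType) : set (Romega R) := [set f | forall n, `|f n| < 1].

Definition is_filter (F : set (set nat)) : Prop :=
  [/\ F setT,
      (forall A B, F A -> A `<=` B -> F B),
      (forall A B, F A -> F B -> F (A `&` B)) &
      ~ F set0].

Definition free_filter (F : set (set nat)) : Prop :=
  is_filter F /\ (forall A : set nat, finite_set (~` A) -> F A).

Definition K_F (R : realType) (F : set (set nat)) : set (Romega R) :=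
  [set f | Qcube R f /\
     forall m : nat, F [set n | `|f n| < (2 : R) ^- m]].

Definition C_F (R : realType) (F : set (set nat)) : set (Romega R) :=
  K_F R F `&` Qopen R.

(* h is a homeomorphism of Q onto itself (Q with the subspace topology of
   the product topology); values of h outside Q are irrelevant. *)
Definition homeomorphism_Q (R : realType) (h : Romega R -> Romega R) : Prop :=
  exists g : Romega R -> Romega R,
    [/\ (forall x, Qcube R x -> Qcube R (h x)),
        (forall y, Qcube R y -> Qcube R (g y)),
        (forall x, Qcube R x -> g (h x) = x) &
        (forall y, Qcube R y -> h (g y) = y)] /\
    ({within Qcube R, continuous h} /\ {within Qcube R, continuous g}).

From HB Require Import structures.
From mathcomp Require Import all_boot all_order all_algebra.
From mathcomp Require Import all_classical all_reals all_analysis.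
Import Order.TTheory GRing.Theory Num.Theory.
Import numFieldNormedType.Exports.
Local Open Scope classical_set_scope.
Local Open Scope ring_scope.

(* The displacement bound [|x n - h x n| <= |z n|] is a closed condition on
   [x], so by continuity of [h] and density of [D] it holds on all of [Q].
   Moreover [K_F] absorbs perturbations dominated by an element [z] of [K_F]:
   on the intersection of the [F]-sets where [|x n|] and [|z n|] are below
   [2^-(m+1)], the perturbed point is below [2^-m].  Applying this to
   [h x - x] and to [y - h^-1 y] gives both inclusions. *)

Lemma within_continuous_le_dense {T : topologicalType} {R : realType}
    (A D : set T) (f : T -> R) (c : R) :
  {within A, continuous f} -> D `<=` A -> A `<=` closure D ->
  (forall d, D d -> f d <= c) -> forall x, A x -> f x <= c.
Proof.
move=> fc DA AD fD x Ax; rewrite leNgt; apply/negP => cfx.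
have /cvgr_gt/(_ _ cfx) near_gt := (subspace_continuousP _ _).1 fc x Ax.
have [d [Dd /(_ (DA d Dd))]] := AD x Ax _ near_gt.
by rewrite ltNge fD.
Qed.

Lemma displacement_le_dense {R : realType} {h : Romega R -> Romega R}
    {A D : set (Romega R)} {z : Romega R} :
  {within A, continuous h} -> D `<=` A -> A `<=` closure D ->
  (forall d n, D d -> `|d n - h d n| <= `|z n|) ->
  forall x n, A x -> `|x n - h x n| <= `|z n|.
Proof.
move=> hc DA AD Dz x n.
apply: (@within_continuous_le_dense (Romega R) R _ _ (fun y => `|y n - h y n|)
  _ _ DA AD) => [|d /Dz//].
apply/subspace_continuousP => y Ay; apply: cvg_norm; apply: cvgB.
  have to_y : within A (nbhs y) --> (y : Romega R) by apply: cvg_within.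
  exact: (pointwise_cvgP y (within_filter _ _)).1 to_y n.
exact: (pointwise_cvgP _ _).1 ((subspace_continuousP _ _).1 hc y Ay) n.
Qed.

Lemma K_F_perturb {R : realType} {F : set (set nat)} {z x w : Romega R} :
  is_filter F -> K_F R F z -> K_F R F x -> Qcube R w ->
  (forall n, `|x n - w n| <= `|z n|) -> K_F R F w.
Proof.
move=> [_ Fup FI _] [_ zF] [_ xF] Qw xw; split => // m.
apply: (Fup _ _ (FI _ _ (xF m.+1) (zF m.+1))) => n [/= xn zn].
have -> : (2 : R) ^- m = 2 ^- m.+1 + 2 ^- m.+1 by rewrite exprSr invfM -splitr.
have w_le : `|w n| <= `|x n| + `|x n - w n|.
  by rewrite -lerBlDl distrC lerB_dist.
exact: le_lt_trans w_le (ltrD xn (le_lt_trans (xw n) zn)).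
Qed.

Theorem mainTheorem11 (R : realType) (F : set (set nat))
  (h : Romega R -> Romega R) (D : set (Romega R)) :
  free_filter F ->
  homeomorphism_Q R h ->
  D `<=` Qopen R -> countable D -> Qcube R `<=` closure D ->
  (exists z, C_F R F z /\
     forall d n, D d -> `|d n - h d n| <= `|z n|) ->
  h @` K_F R F = K_F R F.
Proof.
move=> [Ffilter _] [g [[hQ gQ _ hg] [hc _]]] DQ _ QD [z [[Kz _] Dz]].
have DQc : D `<=` Qcube R by move=> d /DQ dQ n; exact/ltW.
have hz := displacement_le_dense hc DQc QD Dz.
apply/seteqP; split => [_ [x Kx <-]|y Ky].
  by apply: (K_F_perturb Ffilter Kz Kx (hQ _ Kx.1)) => n; exact: hz x n Kx.1.
exists (g y); last exact: hg Ky.1.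
apply: (K_F_perturb Ffilter Kz Ky (gQ _ Ky.1)) => n.
by rewrite distrC; have := hz _ n (gQ _ Ky.1); rewrite (hg _ Ky.1).
Qed.
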